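(* For every positive integer $n$, $$\sum_{k=0}^{n-1}\frac{q^{-k(k-1)/2}}{\genfrac{[}{]}{0pt}{}{n}{k}_q}=\frac{(q^2;q)_n}{(q^2;q^2)_n}\sum_{i=0}^{n-1}\frac{C(i)\,(q^2;q^2)_i}{(q^2;q)_i\,(q^{i+2}-1)},$$ where $$C(i)=\frac{q^{i+1}+q^{3(i+1)}+q^{-i(i-1)/2}+q^{-(i+1)(i-4)/2}-q^{(2+3i-i^2)/2}-q^{-(i+1)(i-2)/2}-2q^{2(i+1)}}{q^{i+1}-1}.$$ (The identity is an identity of rational functions in the indeterminate $q$.)
   Context: For an indeterminate $q$ and any $a$, $(a;q)_n=(1-a)(1-aq)\cdots(1-aq^{n-1})$, with $(a;q)_0=1$. The $q$-binomial coefficient is $\genfrac{[}{]}{0pt}{}{n}{k}_q=\frac{(q;q)_n}{(q;q)_k\,(q;q)_{n-k}}$ for $0\le k\le n$. *)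

From HB Require Import structures.
From mathcomp Require Import all_boot all_order all_algebra.
From mathcomp Require Import fraction.
Set Implicit Arguments. Unset Strict Implicit. Unset Printing Implicit Defensive.
Import Order.TTheory GRing.Theory Num.Theory.
Local Open Scope ring_scope.

Definition RF := {fraction {poly rat}}.
Definition qx : RF := @tofrac _ ('X : {poly rat}).

Definition qpoch (F : fieldType) (a q : F) (n : nat) : F :=
  \prod_(j < n) (1 - a * q ^+ j).

Definition qbinom (F : fieldType) (q : F) (n k : nat) : F :=
  qpoch q q n / (qpoch q q k * qpoch q q (n - k)).

Definition qz (z : int) : RF := qx ^ z.

(* C(i); all the exponents below are exact integer halves *)
Definition Cf (i : nat) : RF :=
  let iz : int := i%:Z in
  (qz (iz + 1) + qz (3 * (iz + 1)) + qz (- ((iz * (iz - 1)) %/ 2)%Z)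
   + qz (- (((iz + 1) * (iz - 4)) %/ 2)%Z)
   - qz (((2 + 3 * iz - iz ^+ 2) %/ 2)%Z)
   - qz (- (((iz + 1) * (iz - 2)) %/ 2)%Z)
   - 2 * qz (2 * (iz + 1)))
  / (qz (iz + 1) - 1).

(* Write S_n = sum_k q^-C(k,2) / [n k]_q.  Pairing the k-th and (k+1)-th terms of S_(n+1)
   through the reciprocal Pascal rule
     1/[n+1 k] + q^(n+1-k)/[n+1 k+1] = (1 - q^(n+2)) / ((1 - q^(n+1)) [n k])
   yields the first-order recurrence
     (1 - q^(2n+2)) S_(n+1) = (1 - q^(n+2)) S_n + (1 - q) q^-C(n,2) + q^(n+1) (1 - q^(n+1)).
   The numerator of C(i) is divisible by q^(i+1) - 1, and
   C(i) = (q - 1) q^-C(i,2) + q^(i+1) (q^(i+1) - 1); the right-hand side then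
   satisfies the same recurrence, and both sides vanish at n = 0. *)

From HB Require Import structures.
From mathcomp Require Import all_boot all_order all_algebra.
From mathcomp Require Import fraction.
From mathcomp Require Import ring.
Set Implicit Arguments. Unset Strict Implicit. Unset Printing Implicit Defensive.
Import Order.TTheory GRing.Theory Num.Theory.
Local Open Scope ring_scope.

Lemma bin2S k : 'C(k.+1, 2) = ('C(k, 2) + k)%N.
Proof. by rewrite binS bin1. Qed.

Lemma bin2_double (k : nat) : k%:Z * (k%:Z - 1) = 'C(k, 2)%:Z * 2.
Proof.
elim: k => [|k IHk] //; rewrite bin2S PoszD mulrDl -IHk -addn1 PoszD; ring.
Qed.

Section QBinomial.

Variables (F : fieldType) (q : F).

Definition qtri (k : nat) : F := (q ^+ 'C(k, 2))^-1.

Lemma qtri0 : qtri 0 = 1.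
Proof. by rewrite /qtri bin0n expr0 invr1. Qed.

Lemma qtriS k : qtri k.+1 = qtri k / q ^+ k.
Proof. by rewrite /qtri bin2S exprD invfM. Qed.

Lemma qpochS (a b : F) n : qpoch a b n.+1 = qpoch a b n * (1 - a * b ^+ n).
Proof. by rewrite /qpoch big_ord_recr. Qed.

Lemma qpoch0 (a b : F) : qpoch a b 0 = 1.
Proof. by rewrite /qpoch big_ord0. Qed.

Hypothesis q_neq0 : q != 0.
Hypothesis q_nonroot : forall m, (0 < m)%N -> q ^+ m != 1.

Lemma subr1X_neq0 m : (0 < m)%N -> 1 - q ^+ m != 0.
Proof. by move=> m_gt0; rewrite subr_eq0 eq_sym q_nonroot. Qed.

Lemma qpoch_expr_neq0 s d n : (0 < s)%N -> qpoch (q ^+ s) (q ^+ d) n != 0.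
Proof.
move=> s_gt0; apply/prodf_neq0 => j _.
by rewrite -exprM -exprD subr1X_neq0 // addn_gt0 s_gt0.
Qed.

Lemma qpoch_qq_neq0 n : qpoch q q n != 0.
Proof. exact: (@qpoch_expr_neq0 1 1). Qed.

Lemma qbinom_n0 n : qbinom q n 0 = 1.
Proof. by rewrite /qbinom subn0 qpoch0 mul1r divff ?qpoch_qq_neq0. Qed.

Lemma qbinom_nn n : qbinom q n n = 1.
Proof. by rewrite /qbinom subnn qpoch0 mulr1 divff ?qpoch_qq_neq0. Qed.

Lemma qbinom_inv_pascal k m :
  (1 - q ^+ (k + m).+1) * ((qbinom q (k + m).+1 k)^-1
                            + q ^+ m.+1 / qbinom q (k + m).+1 k.+1)
  = (1 - q ^+ (k + m).+2) / qbinom q (k + m) k.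
Proof.
have := (qpoch_qq_neq0 k, qpoch_qq_neq0 m, qpoch_qq_neq0 (k + m)).
have := (@subr1X_neq0 k.+1 isT, @subr1X_neq0 m.+1 isT, @subr1X_neq0 (k + m).+1 isT).
rewrite /qbinom subSS addKn -addnS addKn addnS !qpochS !exprS exprD.
move=> [[h1 h2] h3] [[h4 h5] h6].
by field; rewrite h1 h2 h3 h4 h5 h6.
Qed.

Lemma qtri_pascal k m :
  (1 - q ^+ (k + m).+1) * (qtri k / qbinom q (k + m).+1 k
                           + q ^+ (k + m).+1 * qtri k.+1 / qbinom q (k + m).+1 k.+1)
  = (1 - q ^+ (k + m).+2) * (qtri k / qbinom q (k + m) k).
Proof.
have qXk_neq0 : q ^+ k != 0 by rewrite expf_neq0.
have -> : q ^+ (k + m).+1 * qtri k.+1 = qtri k * q ^+ m.+1.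
  by rewrite qtriS -addnS exprD mulrC mulrA divfK.
rewrite -mulrA -mulrDr mulrCA qbinom_inv_pascal; ring.
Qed.

Definition qtri_sum n := \sum_(k < n) qtri k / qbinom q n k.

Lemma qtri_sum_rec n :
  (1 - q ^+ (2 * n.+1)) * qtri_sum n.+1
  = (1 - q ^+ n.+2) * qtri_sum n + (1 - q) * qtri n + q ^+ n.+1 * (1 - q ^+ n.+1).
Proof.
set f := fun j => qtri j / qbinom q n.+1 j.
have shifted : \sum_(k < n.+1) f k.+1 = qtri_sum n.+1 - 1 + qtri n.+1.
  have recl : \sum_(k < n.+2) f k = f 0%N + \sum_(k < n.+1) f k.+1.
    by rewrite big_ord_recl.
  have recr : \sum_(k < n.+2) f k = qtri_sum n.+1 + f n.+1 by rewrite big_ord_recr.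
  apply: (addrI (f 0%N)); rewrite -recl recr /f qbinom_n0 qbinom_nn qtri0 !divr1.
  ring.
have paired : \sum_(k < n.+1) (1 - q ^+ n.+1) * (f k + q ^+ n.+1 * f k.+1)
              = (1 - q ^+ n.+2) * (qtri_sum n + qtri n).
  have -> : qtri_sum n + qtri n = \sum_(k < n.+1) qtri k / qbinom q n k.
    by rewrite big_ord_recr /= qbinom_nn divr1.
  rewrite mulr_sumr.
  apply: eq_bigr => -[k /= k_le_n] _; rewrite /f mulrA.
  by rewrite -(subnKC (k_le_n : (k <= n)%N)) qtri_pascal.
move: paired; rewrite -mulr_sumr big_split /= -mulr_sumr shifted -/(qtri_sum n.+1).
rewrite qtriS => paired.
have qXn_neq0 : q ^+ n != 0 by rewrite expf_neq0.
apply/eqP; rewrite -subr_eq0; move/eqP: paired; rewrite -subr_eq0 => /eqP <-.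
by rewrite mulnC exprM !exprS; apply/eqP; field.
Qed.

Definition qtri_coef i := (q - 1) * qtri i + q ^+ i.+1 * (q ^+ i.+1 - 1).

Lemma qtri_sum_closed n :
  qtri_sum n
  = qpoch (q ^+ 2) q n / qpoch (q ^+ 2) (q ^+ 2) n
    * \sum_(i < n) qtri_coef i * qpoch (q ^+ 2) (q ^+ 2) i
                   / (qpoch (q ^+ 2) q i * (q ^+ (i + 2) - 1)).
Proof.
elim: n => [|n IHn]; first by rewrite /qtri_sum !big_ord0 mulr0.
have := qtri_sum_rec n; rewrite IHn big_ord_recr /= !qpochS [qtri_coef n]/qtri_coef.
have := @qpoch_expr_neq0 2 1 n isT; have := @qpoch_expr_neq0 2 2 n isT.
have := @subr1X_neq0 (2 * n.+1) isT; have := @subr1X_neq0 n.+2 isT.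
have : q ^+ n != 0 by rewrite expf_neq0.
rewrite expr1 addn2 exprAC (mulnC 2) exprM !(exprS q n.+1) !(exprS q n).
move: (qtri_sum n.+1) (qtri n) (\sum_(i < n) _).
move: (qpoch (q ^+ 2) q n) (qpoch (q ^+ 2) (q ^+ 2) n) (q ^+ n).
move=> A B a S w T a_neq0 q2a_neq1 qa2_neq1 B_neq0 A_neq0 rec.
apply: (mulfI qa2_neq1); rewrite rec.
by field; rewrite -opprB oppr_eq0 q2a_neq1 qa2_neq1 A_neq0 B_neq0.
Qed.

End QBinomial.

Lemma qx_neq0 : qx != 0.
Proof. by rewrite /qx tofrac_eq0 polyX_eq0. Qed.

Lemma qx_nonroot m : (0 < m)%N -> qx ^+ m != 1.
Proof.
move=> m_gt0; rewrite /qx -tofracXn -tofrac1 tofrac_eq.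
apply/eqP => /(congr1 (size : {poly rat} -> nat)).
by rewrite size_polyXn size_poly1 => -[m0]; rewrite m0 in m_gt0.
Qed.

Lemma qzD a b : qz (a + b) = qz a * qz b.
Proof. exact: expfzDr qx_neq0. Qed.

Lemma qz_qtri k : qz (- 'C(k, 2)%:Z) = qtri qx k.
Proof. by rewrite /qz -invr_expz. Qed.

Lemma qz_tri k : qz (- ((k%:Z * (k%:Z - 1)) %/ 2)%Z) = qtri qx k.
Proof. by rewrite bin2_double mulzK // qz_qtri. Qed.

Lemma Cf_closed i : Cf i = qtri_coef qx i.
Proof.
have halve (s c e : int) :
    e = s * (i%:Z * (i%:Z - 1)) + c * 2 -> (e %/ 2)%Z = s * 'C(i, 2)%:Z + c.
  by move->; rewrite bin2_double mulrA -mulrDl mulzK.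
rewrite /Cf /= qz_tri.
rewrite (halve 1 (- (i%:Z + 2)) ((i%:Z + 1) * (i%:Z - 4))); last by ring.
rewrite (halve (-1) (i%:Z + 1) (2 + 3 * i%:Z - i%:Z ^+ 2)); last by ring.
rewrite (halve 1 (-1) ((i%:Z + 1) * (i%:Z - 2))); last by ring.
have -> : i%:Z + 1 = i.+1 by rewrite intS addrC.
rewrite (_ : 3 * _ = i.+1%:Z + i.+1%:Z + i.+1%:Z); last by ring.
rewrite (_ : 2 * _ = i.+1%:Z + i.+1%:Z); last by ring.
rewrite (_ : - (1 * _ + - (i%:Z + 2)) = - 'C(i, 2)%:Z + i.+1%:Z + 1); last first.
  by rewrite intS; ring.
rewrite (_ : - (1 * _ + -1) = - 'C(i, 2)%:Z + 1); last by ring.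
rewrite mulN1r !qzD qz_qtri -[qz 1]/(qx ^+ 1) -[qz i.+1]/(qx ^+ i.+1) expr1.
have : qx ^+ i.+1 - 1 != 0 by rewrite subr_eq0 qx_nonroot.
rewrite /qtri_coef; move: (qtri qx i) (qx ^+ i.+1) qx => w x q x_neq1.
by rewrite -[RHS](mulfK x_neq1); congr (_ / _); ring.
Qed.

Theorem theorem2 (n : nat) : (0 < n)%N ->
  \sum_(k < n) qz (- (((k%:Z) * (k%:Z - 1)) %/ 2)%Z) / qbinom qx n k
  = qpoch (qx ^+ 2) qx n / qpoch (qx ^+ 2) (qx ^+ 2) n
    * \sum_(i < n) Cf i * qpoch (qx ^+ 2) (qx ^+ 2) i
                   / (qpoch (qx ^+ 2) qx i * (qx ^+ (i + 2) - 1)).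
Proof.
move=> _; under eq_bigr => k _ do rewrite qz_tri.
under [in RHS]eq_bigr => i _ do rewrite Cf_closed.
exact: qtri_sum_closed qx_neq0 qx_nonroot n.
Qed.
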